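(* Let $f:[0,1]\to[0,1]$ be a continuous surjective function that does not admit a splitting sequence. If $f$ admits a fixed point $d$ that is S-type, M-type or W-type, then $$\varprojlim f=\varprojlim([0,d],f|_{[0,d]})\cup\varprojlim([d,1],f|_{[d,1]})$$ and $$\varprojlim([0,d],f|_{[0,d]})\cap\varprojlim([d,1],f|_{[d,1]})=\{(d,d,\dots)\}.$$
   Context: $\varprojlim f=\{\mathbf x=(x_0,x_1,\dots)\in[0,1]^{\mathbb N}: f(x_{n+1})=x_n\ \forall n\}$; for a closed interval $J\subseteq[0,1]$, $\varprojlim(J,f|_J)=\{\mathbf x\in\varprojlim f: x_n\in J\ \forall n\}$. Fixed-point types: let $c<d<e$ in $[0,1]$ with $d$ a fixed point, $d$ the only fixed point in $(c,e)$, $c=0$ or $c$ a fixed point, and $e=1$ or $e$ a fixed point. Then $d$ is S-type if $f(x)\le x$ for all $x\in[c,d]$ and $f(x)\ge x$ for all $x\in[d,e]$; N-type if $f(x)\ge x$ on $[c,d]$ and $f(x)\le x$ on $[d,e]$; M-type if $f(x)\ge x$ for all $x\in[c,e]$; W-type if $f(x)\le x$ for all $x\in[c,e]$. (The type is witnessed by $(c,e)$; $d$ has a given type if such $c,e$ exist.) A sequence $(T_n)_{n\in\mathbb N}$ of closed intervals $T_n\subsetneq[0,1]$ (possibly degenerate) is tight if $f(T_{n+1})=T_n$ for every $n$ and $T_n$ is nondegenerate for all sufficiently large $n$. A tight sequence $(T_n)$, $T_n=[l_n,r_n]$, is a splitting sequence admitted by $f$ if there are an infinite set $N\subseteq\mathbb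 N$ and nondegenerate closed intervals $S_n\subseteq[0,1]$ ($n\in N$) with $S_n\cap T_n\subseteq\{l_n,r_n\}$ and $f(S_n)=f(T_n)$ for all $n\in N$. *)

(* functions [0,1] -> [0,1] represented as f : R -> R,
   only values on [0,1] matter. *)
From Stdlib Require Import Reals.
Open Scope R_scope.

Definition in01 (x : R) : Prop := 0 <= x <= 1.

Definition maps01 (f : R -> R) : Prop := forall x, in01 x -> in01 (f x).

Definition cont01 (f : R -> R) : Prop :=
  forall x, in01 x -> forall eps, 0 < eps ->
    exists delta, 0 < delta /\
      forall y, in01 y -> Rabs (y - x) < delta -> Rabs (f y - f x) < eps.

Definition surj01 (f : R -> R) : Prop :=
  forall y, in01 y -> exists x, in01 x /\ f x = y.

Definition invlim (f : R -> R) (x : nat -> R) : Prop :=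
  (forall n, in01 (x n)) /\ (forall n, f (x (S n)) = x n).

Definition invlim_on (f : R -> R) (a b : R) (x : nat -> R) : Prop :=
  invlim f x /\ (forall n, a <= x n <= b).

Definition is_fixed (f : R -> R) (d : R) : Prop := f d = d.

Definition type_frame (f : R -> R) (c d e : R) : Prop :=
  0 <= c /\ c < d /\ d < e /\ e <= 1 /\ is_fixed f d /\
  (forall x, c < x < e -> is_fixed f x -> x = d) /\
  (c = 0 \/ is_fixed f c) /\ (e = 1 \/ is_fixed f e).

Definition S_type (f : R -> R) (d : R) : Prop :=
  exists c e, type_frame f c d e /\
    (forall x, c <= x <= d -> f x <= x) /\ (forall x, d <= x <= e -> x <= f x).

Definition N_type (f : R -> R) (d : R) : Prop :=
  exists c e, type_frame f c d e /\
    (forall x, c <= x <= d -> x <= f x) /\ (forall x, d <= x <= e -> f x <= x).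

Definition M_type (f : R -> R) (d : R) : Prop :=
  exists c e, type_frame f c d e /\ (forall x, c <= x <= e -> x <= f x).

Definition W_type (f : R -> R) (d : R) : Prop :=
  exists c e, type_frame f c d e /\ (forall x, c <= x <= e -> f x <= x).

Definition image_eq (f : R -> R) (a b c d : R) : Prop :=
  forall y, c <= y <= d <-> exists x, a <= x <= b /\ f x = y.

(* T_n = [l n, r n]: closed subintervals of [0,1] (possibly degenerate),
   proper subsets of [0,1] *)
Definition tight (f : R -> R) (l r : nat -> R) : Prop :=
  (forall n, 0 <= l n /\ l n <= r n /\ r n <= 1) /\
  (forall n, ~ (l n = 0 /\ r n = 1)) /\
  (forall n, image_eq f (l (S n)) (r (S n)) (l n) (r n)) /\
  (exists N, forall n, (N <= n)%nat -> l n < r n).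

Definition infinite_nat (P : nat -> Prop) : Prop :=
  forall m, exists n, (m <= n)%nat /\ P n.

(* S_n = [sl n, sr n] for n in the infinite set P *)
Definition splitting (f : R -> R) (l r : nat -> R) : Prop :=
  tight f l r /\
  exists (P : nat -> Prop) (sl sr : nat -> R), infinite_nat P /\
    forall n, P n ->
      (0 <= sl n /\ sl n < sr n /\ sr n <= 1) /\
      (forall x, sl n <= x <= sr n -> l n <= x <= r n -> x = l n \/ x = r n) /\
      (forall y, (exists x, sl n <= x <= sr n /\ f x = y) <->
                 (exists x, l n <= x <= r n /\ f x = y)).

Definition admits_splitting (f : R -> R) : Prop :=
  exists l r, splitting f l r.

From Stdlib Require Import Reals Lra Lia Classical IndefiniteDescription FunctionalExtensionality.
Open Scope R_scope.

(* If an inverse-limit sequence had coordinates strictly on both sides of d,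
   some coordinate u = x_(j+1) would satisfy u and f(u) = x_j strictly on
   opposite sides of d (x_(j+1) = d would force x_j = f(d) = d).  Because
   f - id has constant sign on one side of d, such a crossing point u yields
   an interval T = [l, r] <> [0, 1] next to d with f(l) <= l < r <= f(r),
   and two points beyond T (one of them u) whose images enclose T.  Pulling
   T back into itself again and again gives a tight sequence T_n, and
   pulling each T_n back between those two points gives the intervals S_n
   of a splitting sequence.  Hence, without splitting sequences, every
   sequence stays on one side of d. *)

Definition opposite_sides (d a b : R) : Prop := a < d < b \/ b < d < a.

Lemma cont01_opp f : cont01 f -> cont01 (fun x => - f x).
Proof.
  intros Hc x Hx eps Heps. destruct (Hc x Hx eps Heps) as [dl [Hdl Hnear]].
  exists dl; split; [exact Hdl |]. intros y Hy Hyx.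
  replace (- f y - - f x) with (- (f y - f x)) by ring.
  rewrite Rabs_Ropp. auto.
Qed.

Lemma cont01_reflect f : cont01 f -> cont01 (fun x => f (1 - x)).
Proof.
  intros Hc x Hx eps Heps.
  destruct (Hc (1 - x) ltac:(unfold in01 in *; lra) eps Heps) as [dl [Hdl Hnear]].
  exists dl; split; [exact Hdl |]. intros y Hy Hyx.
  apply Hnear; [unfold in01 in *; lra |].
  replace (1 - y - (1 - x)) with (- (y - x)) by ring. rewrite Rabs_Ropp. exact Hyx.
Qed.

Lemma last_hit f a b al : cont01 f -> 0 <= a -> a <= b -> b <= 1 ->
  f a <= al -> al <= f b ->
  exists y, a <= y <= b /\ f y = al /\ forall z, y < z <= b -> al < f z.
Proof.
  intros Hc Ha0 Hab Hb1 Hfa Hfb.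
  set (E := fun z => a <= z <= b /\ f z <= al).
  destruct (completeness E) as [y [Hub Hlub]].
  { exists b; intros z [Hz _]; lra. }
  { exists a; split; [lra | exact Hfa]. }
  assert (Hay : a <= y) by (apply Hub; split; [lra | exact Hfa]).
  assert (Hyb : y <= b) by (apply Hlub; intros z [Hz _]; lra).
  assert (Habove : forall z, y < z <= b -> al < f z).
  { intros z Hz. apply Rnot_le_lt; intro Hfz.
    assert (z <= y) by (apply Hub; split; [lra | exact Hfz]). lra. }
  exists y; split; [lra | split; [| exact Habove]].
  apply Rle_antisym.
  - apply Rnot_lt_le; intro Hlt.
    destruct (Hc y ltac:(unfold in01; lra) (f y - al) ltac:(lra)) as [dl [Hdl Hnear]].
    assert (y <= y - dl); [| lra].
    apply Hlub; intros z [Hz Hfz]. apply Rnot_lt_le; intro Hzy.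
    assert (z <= y) by (apply Hub; split; assumption).
    specialize (Hnear z ltac:(unfold in01; lra) ltac:(apply Rabs_def1; lra)).
    apply Rabs_def2 in Hnear. lra.
  - apply Rnot_lt_le; intro Hlt.
    destruct (Req_dec y b) as [-> | Hyb']; [lra |].
    destruct (Hc y ltac:(unfold in01; lra) (al - f y) ltac:(lra)) as [dl [Hdl Hnear]].
    set (z := Rmin (y + dl / 2) b).
    assert (Hz : y < z <= b) by (split; [apply Rmin_glb_lt; lra | apply Rmin_r]).
    assert (Hz' : z <= y + dl / 2) by apply Rmin_l.
    specialize (Hnear z ltac:(unfold in01; lra) ltac:(apply Rabs_def1; lra)).
    apply Rabs_def2 in Hnear. specialize (Habove z Hz). lra.
Qed.

Lemma first_hit f a b al : cont01 f -> 0 <= a -> a <= b -> b <= 1 ->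
  f a <= al -> al <= f b ->
  exists y, a <= y <= b /\ f y = al /\ forall z, a <= z < y -> f z < al.
Proof.
  intros Hc Ha0 Hab Hb1 Hfa Hfb.
  set (g := fun x => - f (1 - x)).
  assert (Hgb : g (1 - b) <= - al) by (unfold g; replace (1 - (1 - b)) with b by ring; lra).
  assert (Hga : - al <= g (1 - a)) by (unfold g; replace (1 - (1 - a)) with a by ring; lra).
  destruct (last_hit g (1 - b) (1 - a) (- al) (cont01_opp _ (cont01_reflect _ Hc))
              ltac:(lra) ltac:(lra) ltac:(lra) Hgb Hga) as [y [Hy [Hgy Habove]]].
  unfold g in Hgy, Habove.
  exists (1 - y); split; [lra | split; [lra |]].
  intros z Hz. specialize (Habove (1 - z) ltac:(lra)).
  replace (1 - (1 - z)) with z in Habove by ring. lra.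
Qed.

Lemma covering_subinterval f a b al be : cont01 f -> 0 <= a -> a <= b -> b <= 1 ->
  f a <= al -> al < be -> be <= f b ->
  exists s0 s1, a <= s0 < s1 /\ s1 <= b /\ f s0 = al /\ f s1 = be /\
    image_eq f s0 s1 al be.
Proof.
  intros Hc Ha0 Hab Hb1 Hfa Hlt Hfb.
  destruct (first_hit f a b be Hc Ha0 Hab Hb1 ltac:(lra) Hfb) as [s1 [Hs1 [Hfs1 Hbelow]]].
  destruct (last_hit f a s1 al Hc Ha0 ltac:(lra) ltac:(lra) Hfa ltac:(lra))
    as [s0 [Hs0 [Hfs0 Habove]]].
  assert (s0 <> s1) by (intros ->; lra).
  exists s0, s1. do 4 (split; [lra |]).
  intro y; split.
  - intros Hy. destruct (last_hit f s0 s1 y Hc ltac:(lra) ltac:(lra) ltac:(lra) ltac:(lra) ltac:(lra))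
      as [x [Hx [Hfx _]]].
    exists x; split; [lra | exact Hfx].
  - intros [x [Hx <-]]. split.
    + destruct (Req_dec x s0) as [-> | Hx0]; [lra |].
      specialize (Habove x ltac:(lra)). lra.
    + destruct (Req_dec x s1) as [-> | Hx1]; [lra |].
      specialize (Hbelow x ltac:(lra)). lra.
Qed.

Lemma covering_subinterval_between f p q al be : cont01 f -> in01 p -> in01 q ->
  f p <= al -> al < be -> be <= f q ->
  exists s0 s1, s0 < s1 /\ (p <= s0 /\ s1 <= q \/ q <= s0 /\ s1 <= p) /\
    image_eq f s0 s1 al be.
Proof.
  unfold in01; intros Hc Hp Hq Hfp Hlt Hfq.
  destruct (Rle_or_lt p q) as [Hpq | Hqp].
  - destruct (covering_subinterval f p q al be Hc ltac:(lra) Hpq ltac:(lra) Hfp Hlt Hfq)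
      as (s0 & s1 & Hs & Hs1 & _ & _ & Himg).
    exists s0, s1. split; [lra | split; [left; lra | exact Himg]].
  - assert (Hfp' : f (1 - (1 - p)) <= al) by (replace (1 - (1 - p)) with p by ring; lra).
    assert (Hfq' : be <= f (1 - (1 - q))) by (replace (1 - (1 - q)) with q by ring; lra).
    destruct (covering_subinterval (fun x => f (1 - x)) (1 - p) (1 - q) al be
                (cont01_reflect f Hc) ltac:(lra) ltac:(lra) ltac:(lra) Hfp' Hlt Hfq')
      as (s0 & s1 & Hs & Hs1 & _ & _ & Himg).
    exists (1 - s1), (1 - s0). split; [lra | split; [right; lra |]].
    intro y; rewrite (Himg y); split; intros [x [Hx Hfx]];
      exists (1 - x); (split; [lra |]); [exact Hfx |].
    replace (1 - (1 - x)) with x by ring. exact Hfx.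
Qed.

Lemma dependent_choice_seq {A : Type} (P : A -> Prop) (Rel : A -> A -> Prop) (a0 : A) :
  P a0 -> (forall a, P a -> exists b, P b /\ Rel a b) ->
  exists s : nat -> A, s O = a0 /\ forall n, P (s n) /\ Rel (s n) (s (S n)).
Proof.
  intros H0 Hstep.
  destruct (functional_choice (fun a b => P a -> P b /\ Rel a b)) as [g Hg].
  { intro a. destruct (classic (P a)) as [Ha | Ha].
    - destruct (Hstep a Ha) as [b Hb]. exists b. auto.
    - exists a. tauto. }
  exists (fun n => Nat.iter n g a0). split; [reflexivity |].
  assert (HP : forall n, P (Nat.iter n g a0)).
  { induction n as [| n IH]; [exact H0 | exact (proj1 (Hg _ IH))]. }
  intro n. split; [apply HP | exact (proj2 (Hg _ (HP n)))].
Qed.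

Lemma self_covering_nest f l r : cont01 f -> 0 <= l -> l < r -> r <= 1 ->
  f l <= l -> r <= f r ->
  exists ln rn : nat -> R, (forall n, l <= ln n /\ ln n < rn n /\ rn n <= r) /\
    (forall n, image_eq f (ln (S n)) (rn (S n)) (ln n) (rn n)).
Proof.
  intros Hc Hl0 Hlr Hr1 Hfl Hfr.
  set (P := fun t : R * R => l <= fst t /\ fst t < snd t /\ snd t <= r /\
                             f (fst t) <= fst t /\ snd t <= f (snd t)).
  destruct (dependent_choice_seq P (fun t t' => image_eq f (fst t') (snd t') (fst t) (snd t))
              (l, r)) as [s [_ Hs]].
  { unfold P; simpl; lra. }
  { intros [x y] (Hx & Hxy & Hy & Hfx & Hfy); simpl in *.
    destruct (covering_subinterval f x y x y Hc ltac:(lra) ltac:(lra) ltac:(lra) Hfx Hxy Hfy)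
      as (s0 & s1 & Hs & Hs1 & Hfs0 & Hfs1 & Himg).
    exists (s0, s1). split; [unfold P; simpl; repeat split; lra | exact Himg]. }
  exists (fun n => fst (s n)), (fun n => snd (s n)). split.
  - intro n. destruct (Hs n) as [(? & ? & ? & _) _]. lra.
  - intro n. apply Hs.
Qed.

Lemma splitting_of_self_covering f l r p q : cont01 f ->
  0 <= l -> l < r -> r <= 1 -> (0 < l \/ r < 1) -> f l <= l -> r <= f r ->
  in01 p -> in01 q -> (p <= l /\ q <= l \/ r <= p /\ r <= q) -> f p <= l -> r <= f q ->
  admits_splitting f.
Proof.
  intros Hc Hl0 Hlr Hr1 Hproper Hfl Hfr Hp Hq Hside Hfp Hfq.
  destruct (self_covering_nest f l r Hc Hl0 Hlr Hr1 Hfl Hfr) as [ln [rn [Hin Himg]]].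
  assert (Hcov : forall n, exists s : R * R, fst s < snd s /\
            (p <= fst s /\ snd s <= q \/ q <= fst s /\ snd s <= p) /\
            image_eq f (fst s) (snd s) (ln n) (rn n)).
  { intro n. destruct (Hin n) as (? & ? & ?).
    destruct (covering_subinterval_between f p q (ln n) (rn n) Hc Hp Hq
                ltac:(lra) ltac:(lra) ltac:(lra)) as (s0 & s1 & Hs).
    exists (s0, s1). exact Hs. }
  destruct (functional_choice _ Hcov) as [seg Hseg].
  unfold in01 in Hp, Hq.
  exists (fun n => ln (S n)), (fun n => rn (S n)). split.
  - split; [| split; [| split]].
    + intro n. destruct (Hin (S n)) as (? & ? & ?). repeat split; lra.
    + intros n [Hl Hr]. destruct (Hin (S n)). lra.
    + intro n. apply Himg.
    + exists O. intros n _. apply (Hin (S n)).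
  - exists (fun _ => True), (fun n => fst (seg n)), (fun n => snd (seg n)).
    split; [intro m; exists m; split; auto |].
    intros n _. destruct (Hseg n) as (Hlt & Hbetween & Himg_seg).
    destruct (Hin (S n)) as (? & ? & ?).
    split; [lra | split].
    + intros x Hx Hx'. lra.
    + intro y. rewrite <- (Himg_seg y). apply Himg.
Qed.

Lemma splitting_of_crossing_right f d e u : cont01 f -> in01 d -> f d = d ->
  d < e -> e <= 1 -> (forall x, d <= x <= e -> x <= f x) ->
  in01 u -> opposite_sides d u (f u) -> admits_splitting f.
Proof.
  unfold in01; intros Hc Hd Hfd Hde He1 Hup Hu [[Hud Hfu] | [Hfu Hdu]].
  - pose proof (Rmin_l (f u) e). pose proof (Rmin_r (f u) e).
    pose proof (Rmin_glb_lt (f u) e d Hfu Hde).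
    set (t := Rmin (f u) e) in *.
    pose proof (Hup t ltac:(lra)).
    apply (splitting_of_self_covering f d t d u); unfold in01; try assumption; lra.
  - assert (Heu : e < u).
    { apply Rnot_le_lt; intro Hue. specialize (Hup u ltac:(lra)). lra. }
    pose proof (Hup e ltac:(lra)).
    apply (splitting_of_self_covering f d e u e); unfold in01; try assumption; lra.
Qed.

Lemma splitting_of_crossing_left f d c u : cont01 f -> in01 d -> f d = d ->
  0 <= c -> c < d -> (forall x, c <= x <= d -> f x <= x) ->
  in01 u -> opposite_sides d u (f u) -> admits_splitting f.
Proof.
  unfold in01; intros Hc Hd Hfd Hc0 Hcd Hdn Hu [[Hud Hfu] | [Hfu Hdu]].
  - assert (Huc : u < c).
    { apply Rnot_le_lt; intro Hcu. specialize (Hdn u ltac:(lra)). lra. }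
    pose proof (Hdn c ltac:(lra)).
    apply (splitting_of_self_covering f c d c u); unfold in01; try assumption; lra.
  - pose proof (Rmax_l (f u) c). pose proof (Rmax_r (f u) c).
    pose proof (Rmax_lub_lt (f u) c d Hfu Hcd).
    set (t := Rmax (f u) c) in *.
    pose proof (Hdn t ltac:(lra)).
    apply (splitting_of_self_covering f t d u d); unfold in01; try assumption; lra.
Qed.

Lemma splitting_of_typed_crossing f d u : cont01 f -> in01 d -> f d = d ->
  S_type f d \/ M_type f d \/ W_type f d ->
  in01 u -> opposite_sides d u (f u) -> admits_splitting f.
Proof.
  intros Hc Hd Hfd Htype.
  destruct Htype as [[c [e [Hfr [Hdn _]]]] | [[c [e [Hfr Hup]]] | [c [e [Hfr Hdn]]]]];
    destruct Hfr as (Hc0 & Hcd & Hde & He1 & _).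
  - exact (splitting_of_crossing_left f d c u Hc Hd Hfd Hc0 Hcd Hdn).
  - apply (splitting_of_crossing_right f d e u); try assumption.
    intros x Hx. apply Hup. lra.
  - apply (splitting_of_crossing_left f d c u); try assumption.
    intros x Hx. apply Hdn. lra.
Qed.

Lemma invlim_crossing f d (x : nat -> R) : (forall n, f (x (S n)) = x n) -> f d = d ->
  forall n m, opposite_sides d (x n) (x m) -> exists j, opposite_sides d (x (S j)) (x j).
Proof.
  intros Hx Hfd.
  assert (Hgap : forall k i, opposite_sides d (x i) (x (i + k)%nat) ->
                   exists j, opposite_sides d (x (S j)) (x j)).
  { induction k as [| k IH]; intros i Hi; unfold opposite_sides in *.
    - rewrite Nat.add_0_r in Hi. lra.
    - replace (i + S k)%nat with (S i + k)%nat in Hi by lia.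
      assert (Hnd : x (S i) <> d) by (intro E; rewrite <- (Hx i), E, Hfd in Hi; lra).
      destruct (classic (opposite_sides d (x (S i)) (x i))) as [Hcr | Hncr];
        [exists i; exact Hcr |].
      apply (IH (S i)). unfold opposite_sides in Hncr.
      destruct (Rtotal_order (x (S i)) d) as [Hlt | [Heq | Hgt]]; [| contradiction |].
      + destruct (Rlt_or_le d (x i)); [exfalso; apply Hncr |]; lra.
      + destruct (Rlt_or_le (x i) d); [exfalso; apply Hncr |]; lra. }
  intros n m Hnm. destruct (Nat.le_gt_cases n m).
  - apply (Hgap (m - n)%nat n). replace (n + (m - n))%nat with m by lia. exact Hnm.
  - apply (Hgap (n - m)%nat m). replace (m + (n - m))%nat with n by lia.
    unfold opposite_sides in *. lra.
Qed.

Lemma invlim_one_side f d x : f d = d ->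
  (forall u, in01 u -> ~ opposite_sides d u (f u)) ->
  invlim f x -> invlim_on f 0 d x \/ invlim_on f d 1 x.
Proof.
  intros Hfd Hnc [Hin Hx].
  destruct (classic (exists n, d < x n)) as [[n Hn] | Hbelow].
  - right. split; [split; assumption |]. intro m. split; [| apply Hin].
    apply Rnot_lt_le; intro Hm.
    destruct (invlim_crossing f d x Hx Hfd n m) as [j Hj]; [unfold opposite_sides; lra |].
    apply (Hnc (x (S j)) (Hin _)). rewrite Hx. exact Hj.
  - left. split; [split; assumption |]. intro m. split; [apply Hin |].
    apply Rnot_lt_le; intro Hm. apply Hbelow. exists m. exact Hm.
Qed.

Theorem lemma4p3 (f : R -> R) (d : R) :
  maps01 f -> cont01 f -> surj01 f -> ~ admits_splitting f ->
  in01 d -> is_fixed f d -> (S_type f d \/ M_type f d \/ W_type f d) ->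
  (forall x, invlim f x <-> (invlim_on f 0 d x \/ invlim_on f d 1 x)) /\
  (forall x, (invlim_on f 0 d x /\ invlim_on f d 1 x) <-> x = (fun _ => d)).
Proof.
  intros _ Hc _ Hns Hd Hfd Htype. unfold is_fixed in Hfd.
  assert (Hnc : forall u, in01 u -> ~ opposite_sides d u (f u)).
  { intros u Hu Hcr. apply Hns. exact (splitting_of_typed_crossing f d u Hc Hd Hfd Htype Hu Hcr). }
  split; intro x; split.
  - apply invlim_one_side; assumption.
  - intros [[Hx _] | [Hx _]]; exact Hx.
  - intros [[_ Hlo] [_ Hhi]]. apply functional_extensionality; intro n.
    specialize (Hlo n); specialize (Hhi n). lra.
  - intros ->. unfold in01 in Hd.
    repeat split; intros; try exact Hfd; lra.
Qed.
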